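(* Let $k_0\ge 0$ and $c_0\in L^1([-\tau,0);\mathbb{R}_+)$. Let $c^m\in L^1_{loc}([0,\infty);\mathbb{R}_+)$ be the unique solution of $$c^m(t)=\varepsilon\int_{t-\tau}^{t}\widetilde{c}^{\,m}(u)\,e^{\eta(u-t)}\,du,\qquad t\ge 0,$$ where $\widetilde c^{\,m}$ is the concatenation of $c_0$ and $c^m$. Then every control $c\in L^1_{loc}([0,\infty);\mathbb{R}_+)$ satisfying the habit constraint $c(t)\ge h(t)$ for almost every $t\ge0$ satisfies $c(t)\ge c^m(t)$ for almost every $t\ge 0$, and its associated capital path satisfies, for every $t\ge 0$, $$k(t)\le k^M(t):=e^{(A-\delta)t}\Big[k_0-\int_0^t c^m(u)e^{-(A-\delta)u}\,du\Big].$$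
   Context: Fixed parameters: $A>0$, $\delta>0$, $\rho>0$, $\gamma>0$ with $\gamma\ne1$, $\varepsilon>0$ (habit intensity), $\eta>0$ (habit persistence), $\tau>0$ (memory). Given an initial past consumption $c_0\in L^1([-\tau,0);\mathbb{R}_+)$ and a control $c\in L^1_{loc}([0,\infty);\mathbb{R}_+)$, the concatenation is $\widetilde c(s)=c_0(s)$ for $s\in[-\tau,0)$ and $\widetilde c(s)=c(s)$ for $s\ge0$. The (internal) habit is $h(t)=\varepsilon\int_{t-\tau}^{t}\widetilde c(u)e^{\eta(u-t)}du$ for $t\ge0$. Given $k_0$, the capital path associated to $c$ is the solution of $\dot k(t)=(A-\delta)k(t)-c(t)$, $k(0)=k_0$, i.e. $k(t)=k_0e^{(A-\delta)t}-\int_0^te^{(A-\delta)(t-u)}c(u)\,du$. *)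

(* Lebesgue integration is not available, so we
   use the Henstock-Kurzweil (gauge) integral, which for nonnegative functions
   coincides with the Lebesgue integral (nonnegative HK-integrable functions are
   exactly the nonnegative Lebesgue-integrable ones, with the same integral). *)
From Stdlib Require Import Reals Classical ClassicalEpsilon.
Open Scope R_scope.

(* fine_sum f g a b S : S is the Riemann sum of f over some g-fine tagged
   partition of [a,b] (built left to right). *)
Inductive fine_sum (f g : R -> R) (a : R) : R -> R -> Prop :=
| fine_nil : fine_sum f g a a 0
| fine_cons : forall m b t S,
    fine_sum f g a m S -> m < b -> m <= t -> t <= b ->
    t - g t < m -> b < t + g t ->
    fine_sum f g a b (S + f t * (b - m)).

Definition HK_integral (f : R -> R) (a b I : R) : Prop :=
  a <= b /\
  forall eps, 0 < eps ->
    exists g : R -> R, (forall x, 0 < g x) /\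
      forall S, fine_sum f g a b S -> Rabs (S - I) < eps.

(* The value of the integral (meaningful when it exists; it is unique). *)
Definition HKint (f : R -> R) (a b : R) : R :=
  epsilon (inhabits 0) (fun I => HK_integral f a b I).

Definition null_set (N : R -> Prop) : Prop :=
  forall eps, 0 < eps ->
    exists lo hi : nat -> R,
      (forall n, lo n <= hi n) /\
      (forall x, N x -> exists n, lo n < x < hi n) /\
      (forall n, sum_f_R0 (fun i => hi i - lo i) n <= eps).

Definition ae_pos (P : R -> Prop) : Prop :=
  null_set (fun t => 0 <= t /\ ~ P t).

Definition L1loc_pos (c : R -> R) : Prop :=
  (forall t, 0 <= t -> 0 <= c t) /\
  (forall T, 0 <= T -> exists I, HK_integral c 0 T I).

Definition L1_past (tau : R) (c0 : R -> R) : Prop :=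
  (forall s, -tau <= s < 0 -> 0 <= c0 s) /\
  (exists I, HK_integral c0 (-tau) 0 I).

Definition concat (c0 c : R -> R) (s : R) : R :=
  if Rlt_dec s 0 then c0 s else c s.

Definition habit (epsh eta tau : R) (c0 c : R -> R) (t : R) : R :=
  epsh * HKint (fun u => concat c0 c u * exp (eta * (u - t))) (t - tau) t.

Definition kpath (A delta k0 : R) (c : R -> R) (t : R) : R :=
  k0 * exp ((A - delta) * t)
  - HKint (fun u => exp ((A - delta) * (t - u)) * c u) 0 t.

Definition kM (A delta k0 : R) (cm : R -> R) (t : R) : R :=
  exp ((A - delta) * t) *
  (k0 - HKint (fun u => cm u * exp (- (A - delta) * u)) 0 t).

(** The minimal path [cm] makes the habit constraint bind, so the gap
    [D t = h_c(t) - h_cm(t)] between the habits of an admissible [c] and of [cm]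
    satisfies [c - cm >= D] almost everywhere, and hence
    [D t >= eps * int_{t-tau}^t min(D,0)(u) du].  If [D >= 0] on [0,s) and
    [mu] bounds [-D] on [s, s + 1/(2 eps)], this gives [-D <= mu/2] there, so
    [mu = 0]: stepping forward in blocks of length [1/(2 eps)], [D >= 0]
    everywhere, whence [c >= cm] a.e.  The capital comparison is then the
    monotonicity of [c |-> int_0^t e^{(A-delta)(t-u)} c(u) du]. *)

From Stdlib Require Import Reals Lra Lia List Classical ClassicalEpsilon.
Open Scope R_scope.

(** * Gauge integrals over explicit tagged partitions *)

(* A partition of [a,b] is listed right to left as triples (left end, tag, right end). *)
Inductive fine_partition (g : R -> R) (a : R) : R -> list (R * R * R) -> Prop :=
| fine_partition_nil : fine_partition g a a nil
| fine_partition_cons : forall m b t l, fine_partition g a m l -> m < b -> m <= t -> t <= b ->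
    t - g t < m -> b < t + g t -> fine_partition g a b ((m, t, b) :: l).

Fixpoint riemann_sum (f : R -> R) (l : list (R * R * R)) : R :=
  match l with
  | nil => 0
  | (m, t, b) :: l' => riemann_sum f l' + f t * (b - m)
  end.

Definition gauge_integral (f : R -> R) (a b I : R) : Prop :=
  a <= b /\ forall eps, 0 < eps -> exists g, (forall x, 0 < g x) /\
    forall l, fine_partition g a b l -> Rabs (riemann_sum f l - I) < eps.

Lemma fine_sum_partition f g a b S :
  fine_sum f g a b S -> exists l, fine_partition g a b l /\ S = riemann_sum f l.
Proof.
  induction 1 as [|m b t S _ [l [Hl ->]]].
  - exists nil; split; [constructor | reflexivity].
  - exists ((m, t, b) :: l); split; [econstructor; eauto | reflexivity].
Qed.

Lemma partition_fine_sum f g a b l :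
  fine_partition g a b l -> fine_sum f g a b (riemann_sum f l).
Proof. induction 1; simpl; constructor; auto. Qed.

Lemma gauge_integral_HK f a b I : gauge_integral f a b I <-> HK_integral f a b I.
Proof.
  split; intros [Hab H]; split; auto; intros eps Heps;
    destruct (H eps Heps) as [g [Hg Hsum]]; exists g; split; auto.
  - intros S HS. destruct (fine_sum_partition _ _ _ _ _ HS) as [l [Hl ->]]. auto.
  - intros l Hl. apply Hsum, partition_fine_sum, Hl.
Qed.

Lemma fine_partition_le g a b l : fine_partition g a b l -> a <= b.
Proof. induction 1; lra. Qed.

Lemma fine_partition_gauge_mono g g' a b l :
  (forall x, g x <= g' x) -> fine_partition g a b l -> fine_partition g' a b l.
Proof.
  intros Hg. induction 1 as [|m b t l _ IH]; constructor; auto;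
    specialize (Hg t); lra.
Qed.

Lemma fine_partition_app g a m b l1 l2 :
  fine_partition g a m l1 -> fine_partition g m b l2 -> fine_partition g a b (l2 ++ l1).
Proof. intros H1. induction 1; simpl; auto. econstructor; eauto. Qed.

Lemma riemann_sum_app f l1 l2 : riemann_sum f (l2 ++ l1) = riemann_sum f l2 + riemann_sum f l1.
Proof. induction l2 as [|[[m t] b] l IH]; simpl; [|rewrite IH]; ring. Qed.

(* Cousin's lemma: the supremum of the points reachable by a fine partition is [b]. *)
Lemma fine_partition_exists g a b : (forall x, 0 < g x) -> a <= b -> exists l, fine_partition g a b l.
Proof.
  intros Hg Hab.
  set (E := fun x => a <= x <= b /\ exists l, fine_partition g a x l).
  assert (Ea : E a) by (split; [lra | exists nil; constructor]).
  destruct (completeness E) as [s [Hub Hlub]].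
  { exists b. intros x [Hx _]. lra. }
  { exists a. exact Ea. }
  assert (Has : a <= s) by (apply Hub, Ea).
  assert (Hsb : s <= b) by (apply Hlub; intros x [Hx _]; lra).
  pose proof (Hg s) as Hgs.
  assert (Es : E s).
  { destruct (classic (exists x, E x /\ s - g s < x)) as [[x [[Hx [l Hl]] Hxs]] | Hnone].
    - assert (x <= s) by (apply Hub; split; [lra | exists l; auto]).
      split; [lra |].
      destruct (Req_dec x s) as [<- | Hne]; [exists l; auto |].
      exists ((x, s, s) :: l). constructor; auto; lra.
    - exfalso. assert (s <= s - g s); [| lra].
      apply Hlub. intros x Ex. apply Rnot_lt_le. intro. apply Hnone. exists x; auto. }
  destruct Es as [_ [l Hl]].
  destruct (Req_dec s b) as [<- | Hne]; [exists l; exact Hl |].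
  set (y := Rmin b (s + g s / 2)).
  assert (Hy : s < y /\ y <= b /\ y <= s + g s / 2).
  { split; [apply Rmin_glb_lt; lra | split; [apply Rmin_l | apply Rmin_r]]. }
  assert (Ey : E y).
  { split; [lra |]. exists ((s, s, y) :: l). constructor; auto; lra. }
  pose proof (Hub y Ey). lra.
Qed.

Definition gauge_min (g1 g2 : R -> R) (x : R) : R := Rmin (g1 x) (g2 x).

Lemma gauge_min_pos g1 g2 :
  (forall x, 0 < g1 x) -> (forall x, 0 < g2 x) -> forall x, 0 < gauge_min g1 g2 x.
Proof. intros H1 H2 x. apply Rmin_glb_lt; auto. Qed.

Lemma fine_partition_min_l g1 g2 a b l :
  fine_partition (gauge_min g1 g2) a b l -> fine_partition g1 a b l.
Proof. apply fine_partition_gauge_mono. intro; apply Rmin_l. Qed.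

Lemma fine_partition_min_r g1 g2 a b l :
  fine_partition (gauge_min g1 g2) a b l -> fine_partition g2 a b l.
Proof. apply fine_partition_gauge_mono. intro; apply Rmin_r. Qed.

Lemma riemann_sum_plus f h l :
  riemann_sum (fun x => f x + h x) l = riemann_sum f l + riemann_sum h l.
Proof. induction l as [|[[m t] b] l IH]; simpl; [|rewrite IH]; ring. Qed.

Lemma riemann_sum_scal k f l : riemann_sum (fun x => k * f x) l = k * riemann_sum f l.
Proof. induction l as [|[[m t] b] l IH]; simpl; [|rewrite IH]; ring. Qed.

Lemma riemann_sum_minus f h l :
  riemann_sum (fun x => f x - h x) l = riemann_sum f l - riemann_sum h l.
Proof. induction l as [|[[m t] b] l IH]; simpl; [|rewrite IH]; ring. Qed.

Lemma riemann_sum_ext g a b l f h : fine_partition g a b l ->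
  (forall x, a <= x <= b -> f x = h x) -> riemann_sum f l = riemann_sum h l.
Proof.
  intros Hl Hfh. induction Hl as [|m b t l Hl IH]; simpl; auto.
  pose proof (fine_partition_le _ _ _ _ Hl).
  rewrite IH, (Hfh t); auto; [lra | intros; apply Hfh; lra].
Qed.

Lemma riemann_sum_abs_le g a b l u v : fine_partition g a b l ->
  (forall x, a <= x <= b -> Rabs (u x) <= v x) -> Rabs (riemann_sum u l) <= riemann_sum v l.
Proof.
  intros Hl Huv. induction Hl as [|m b t l Hl IH]; simpl.
  - rewrite Rabs_R0; lra.
  - pose proof (fine_partition_le _ _ _ _ Hl).
    assert (Rabs (riemann_sum u l) <= riemann_sum v l) by (apply IH; intros; apply Huv; lra).
    assert (Rabs (u t) * (b - m) <= v t * (b - m)) by (apply Rmult_le_compat_r; [lra | apply Huv; lra]).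
    eapply Rle_trans; [apply Rabs_triang |].
    rewrite Rabs_mult, (Rabs_right (b - m)) by lra. lra.
Qed.

Lemma riemann_sum_le g a b l f h : fine_partition g a b l ->
  (forall x, a <= x <= b -> f x <= h x) -> riemann_sum f l <= riemann_sum h l.
Proof.
  intros Hl Hfh. induction Hl as [|m b t l Hl IH]; simpl; [lra |].
  pose proof (fine_partition_le _ _ _ _ Hl).
  assert (riemann_sum f l <= riemann_sum h l) by (apply IH; intros; apply Hfh; lra).
  assert (f t * (b - m) <= h t * (b - m)) by (apply Rmult_le_compat_r; [lra | apply Hfh; lra]).
  lra.
Qed.

Lemma gauge_integral_le_ab f a b I : gauge_integral f a b I -> a <= b.
Proof. intros [H _]; exact H. Qed.

Lemma gauge_integral_common_partition f h a b I J eps :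
  gauge_integral f a b I -> gauge_integral h a b J -> 0 < eps ->
  exists g l, fine_partition g a b l /\
    Rabs (riemann_sum f l - I) < eps /\ Rabs (riemann_sum h l - J) < eps.
Proof.
  intros [Hab H1] [_ H2] Heps.
  destruct (H1 eps Heps) as [g1 [Hg1 K1]]. destruct (H2 eps Heps) as [g2 [Hg2 K2]].
  destruct (fine_partition_exists (gauge_min g1 g2) a b) as [l Hl]; auto.
  { apply gauge_min_pos; auto. }
  exists (gauge_min g1 g2), l. split; [exact Hl |].
  split; [apply K1, (fine_partition_min_l _ _ _ _ _ Hl) | apply K2, (fine_partition_min_r _ _ _ _ _ Hl)].
Qed.

Lemma gauge_integral_unique f a b I J : gauge_integral f a b I -> gauge_integral f a b J -> I = J.
Proof.
  intros HI HJ. destruct (Req_dec I J) as [| Hne]; auto. exfalso.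
  assert (Hd : 0 < Rabs (I - J)) by (apply Rabs_pos_lt; lra).
  destruct (gauge_integral_common_partition f f a b I J (Rabs (I - J) / 2) HI HJ)
    as [g [l [_ [K1 K2]]]]; [lra |].
  assert (Rabs (I - J) <= Rabs (riemann_sum f l - I) + Rabs (riemann_sum f l - J)).
  { replace (I - J) with (- (riemann_sum f l - I) + (riemann_sum f l - J)) by ring.
    rewrite <- (Rabs_Ropp (riemann_sum f l - I)). apply Rabs_triang. }
  lra.
Qed.

Lemma HKint_gauge_integral f a b I : gauge_integral f a b I -> HKint f a b = I.
Proof.
  intros H. unfold HKint.
  assert (Hex : exists I, HK_integral f a b I) by (exists I; apply gauge_integral_HK, H).
  apply (gauge_integral_unique f a b); auto.
  apply gauge_integral_HK, (epsilon_spec (inhabits 0) _ Hex).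
Qed.

Lemma gauge_integral_le f h a b I J : gauge_integral f a b I -> gauge_integral h a b J ->
  (forall x, a <= x <= b -> f x <= h x) -> I <= J.
Proof.
  intros HI HJ Hfh. apply Rnot_lt_le. intro Hlt.
  destruct (gauge_integral_common_partition f h a b I J ((I - J) / 2) HI HJ)
    as [g [l [Hl [K1 K2]]]]; [lra |].
  pose proof (riemann_sum_le _ _ _ _ _ _ Hl Hfh).
  apply Rabs_def2 in K1. apply Rabs_def2 in K2. lra.
Qed.

Lemma gauge_integral_plus f h a b I J : gauge_integral f a b I -> gauge_integral h a b J ->
  gauge_integral (fun x => f x + h x) a b (I + J).
Proof.
  intros [Hab H1] [_ H2]. split; auto. intros eps Heps.
  destruct (H1 (eps / 2)) as [g1 [Hg1 K1]]; [lra |].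
  destruct (H2 (eps / 2)) as [g2 [Hg2 K2]]; [lra |].
  exists (gauge_min g1 g2). split; [apply gauge_min_pos; auto |].
  intros l Hl. rewrite riemann_sum_plus.
  pose proof (K1 l (fine_partition_min_l _ _ _ _ _ Hl)).
  pose proof (K2 l (fine_partition_min_r _ _ _ _ _ Hl)).
  replace (riemann_sum f l + riemann_sum h l - (I + J))
    with ((riemann_sum f l - I) + (riemann_sum h l - J)) by ring.
  eapply Rle_lt_trans; [apply Rabs_triang | lra].
Qed.

Lemma gauge_integral_scal k f a b I : gauge_integral f a b I ->
  gauge_integral (fun x => k * f x) a b (k * I).
Proof.
  intros [Hab H]. split; auto. intros eps Heps.
  assert (Hk : 0 < Rabs k + 1) by (pose proof (Rabs_pos k); lra).
  destruct (H (eps / (Rabs k + 1))) as [g [Hg K]]; [apply Rdiv_lt_0_compat; auto |].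
  exists g. split; auto. intros l Hl. specialize (K l Hl).
  rewrite riemann_sum_scal, <- Rmult_minus_distr_l, Rabs_mult.
  apply Rle_lt_trans with ((Rabs k + 1) * Rabs (riemann_sum f l - I)).
  - pose proof (Rabs_pos (riemann_sum f l - I)). nra.
  - apply (Rmult_lt_compat_l (Rabs k + 1)) in K; auto.
    replace ((Rabs k + 1) * (eps / (Rabs k + 1))) with eps in K by (field; lra). exact K.
Qed.

Lemma gauge_integral_ext f h a b I : gauge_integral f a b I ->
  (forall x, a <= x <= b -> f x = h x) -> gauge_integral h a b I.
Proof.
  intros [Hab H] Hfh. split; auto. intros eps Heps.
  destruct (H eps Heps) as [g [Hg K]]. exists g; split; auto.
  intros l Hl. rewrite <- (riemann_sum_ext _ _ _ _ _ _ Hl Hfh). auto.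
Qed.

Lemma gauge_integral_minus f h a b I J : gauge_integral f a b I -> gauge_integral h a b J ->
  gauge_integral (fun x => f x - h x) a b (I - J).
Proof.
  intros H1 H2.
  pose proof (gauge_integral_plus _ _ _ _ _ _ H1 (gauge_integral_scal (-1) _ _ _ _ H2)) as H.
  replace (I - J) with (I + -1 * J) by ring.
  apply (gauge_integral_ext _ _ _ _ _ H). intros; ring.
Qed.

Lemma gauge_integral_const k a b : a <= b -> gauge_integral (fun _ => k) a b (k * (b - a)).
Proof.
  intros Hab. split; auto. intros eps Heps. exists (fun _ => 1). split; [intros; lra |].
  intros l Hl. enough (riemann_sum (fun _ => k) l = k * (b - a)) as ->.
  { rewrite Rminus_diag, Rabs_R0. exact Heps. }
  clear Hab. induction Hl as [|m b t l _ IH]; simpl; [| rewrite IH]; ring.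
Qed.

Lemma gauge_integral_nonneg f a b I : gauge_integral f a b I ->
  (forall x, a <= x <= b -> 0 <= f x) -> 0 <= I.
Proof.
  intros H Hf. pose proof (gauge_integral_const 0 a b (gauge_integral_le_ab _ _ _ _ H)) as H0.
  rewrite Rmult_0_l in H0. exact (gauge_integral_le _ _ _ _ _ _ H0 H Hf).
Qed.

Fixpoint gauge_inf (G : nat -> R -> R) (n : nat) (x : R) : R :=
  match n with O => G O x | S k => Rmin (gauge_inf G k x) (G (S k) x) end.

Lemma gauge_inf_pos G : (forall n x, 0 < G n x) -> forall n x, 0 < gauge_inf G n x.
Proof. intros H n x. induction n; simpl; auto. apply Rmin_glb_lt; auto. Qed.

Lemma gauge_inf_le G n x : gauge_inf G n x <= G n x.
Proof. destruct n; simpl; [lra | apply Rmin_r]. Qed.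

Lemma gauge_inf_antimono G n m x : (n <= m)%nat -> gauge_inf G m x <= gauge_inf G n x.
Proof. induction 1; simpl; [lra | eapply Rle_trans; [apply Rmin_l | auto]]. Qed.

Lemma inv_INR_S_lt n : (0 < n)%nat -> / INR (S n) < / INR n.
Proof.
  intros Hn. apply Rinv_lt_contravar.
  - apply Rmult_lt_0_compat; apply lt_0_INR; lia.
  - apply lt_INR; lia.
Qed.

(* The limit is that of the Riemann sums over partitions fine for the [n]-th Cauchy
   gauge and all the previous ones. *)
Lemma gauge_integral_cauchy f a b : a <= b ->
  (forall eps, 0 < eps -> exists g, (forall x, 0 < g x) /\ forall l1 l2,
     fine_partition g a b l1 -> fine_partition g a b l2 ->
     Rabs (riemann_sum f l1 - riemann_sum f l2) < eps) ->
  exists I, gauge_integral f a b I.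
Proof.
  intros Hab H.
  set (P := fun n (g : R -> R) => (forall x, 0 < g x) /\ forall l1 l2,
     fine_partition g a b l1 -> fine_partition g a b l2 ->
     Rabs (riemann_sum f l1 - riemann_sum f l2) < / INR (S n)).
  set (G := fun n => epsilon (inhabits (fun _ : R => 1)) (P n)).
  assert (HG : forall n, P n (G n)).
  { intro n. apply epsilon_spec, H, Rinv_0_lt_compat, lt_0_INR. lia. }
  assert (HGpos : forall n x, 0 < G n x) by (intros n x; apply (HG n)).
  set (L := fun n => epsilon (inhabits nil) (fine_partition (gauge_inf G n) a b)).
  assert (HL : forall n, fine_partition (gauge_inf G n) a b (L n)).
  { intro n. apply epsilon_spec, fine_partition_exists; auto. apply gauge_inf_pos; auto. }
  assert (Hclose : forall N n l, (N <= n)%nat -> fine_partition (gauge_inf G N) a b l ->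
     Rabs (riemann_sum f l - riemann_sum f (L n)) < / INR (S N)).
  { intros N n l HNn Hl. apply (HG N).
    - apply (fine_partition_gauge_mono (gauge_inf G N)); auto. intro; apply gauge_inf_le.
    - apply (fine_partition_gauge_mono (gauge_inf G n)); auto.
      intro; eapply Rle_trans; [apply gauge_inf_antimono; eauto | apply gauge_inf_le]. }
  set (u := fun n => riemann_sum f (L n)).
  assert (Hu : Cauchy_crit u).
  { intros eps Heps. destruct (archimed_cor1 eps Heps) as [N [HN HN0]].
    exists N. intros n m Hn Hm. unfold Rdist, u.
    pose proof (inv_INR_S_lt N HN0).
    enough (Rabs (riemann_sum f (L n) - riemann_sum f (L m)) < / INR (S N)) by lra.
    apply Hclose; auto.
    apply (fine_partition_gauge_mono (gauge_inf G n)); auto. intro; apply gauge_inf_antimono; auto. }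
  destruct (R_complete u Hu) as [I HI]. exists I. split; auto.
  intros eps Heps. destruct (archimed_cor1 (eps / 2)) as [N [HN HN0]]; [lra |].
  exists (gauge_inf G N). split; [apply gauge_inf_pos; auto |].
  intros l Hl. destruct (HI (eps / 2)) as [M HM]; [lra |].
  specialize (HM (max N M) (Nat.le_max_r _ _)). unfold Rdist, u in HM.
  pose proof (Hclose N (max N M) l (Nat.le_max_l _ _) Hl).
  pose proof (inv_INR_S_lt N HN0).
  replace (riemann_sum f l - I)
    with ((riemann_sum f l - riemann_sum f (L (max N M))) + (riemann_sum f (L (max N M)) - I)) by ring.
  eapply Rle_lt_trans; [apply Rabs_triang | lra].
Qed.

(* Extend partitions of [c,d] by fixed fine partitions of [a,c] and [d,b]. *)
Lemma gauge_integral_subinterval f a b c d I : gauge_integral f a b I ->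
  a <= c -> c <= d -> d <= b -> exists J, gauge_integral f c d J.
Proof.
  intros [Hab H] Hac Hcd Hdb. apply gauge_integral_cauchy; auto.
  intros eps Heps. destruct (H (eps / 2)) as [g [Hg K]]; [lra |].
  exists g. split; auto.
  destruct (fine_partition_exists g a c Hg Hac) as [lL HlL].
  destruct (fine_partition_exists g d b Hg Hdb) as [lR HlR].
  intros l1 l2 H1 H2.
  pose proof (K _ (fine_partition_app _ _ _ _ _ _ (fine_partition_app _ _ _ _ _ _ HlL H1) HlR)) as E1.
  pose proof (K _ (fine_partition_app _ _ _ _ _ _ (fine_partition_app _ _ _ _ _ _ HlL H2) HlR)) as E2.
  rewrite !riemann_sum_app in E1, E2.
  apply Rabs_def2 in E1. apply Rabs_def2 in E2. apply Rabs_def1; lra.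
Qed.

Section SplitGauge.
Variables (g1 g2 : R -> R) (c : R).
Hypotheses (Hg1 : forall x, 0 < g1 x) (Hg2 : forall x, 0 < g2 x).

(* A tagged piece fine for this gauge cannot contain [c] in its interior unless [c] is
   its tag, so fine partitions split at [c]. *)
Definition split_gauge (x : R) : R :=
  if Rlt_dec x c then Rmin (g1 x) (c - x)
  else if Rlt_dec c x then Rmin (g2 x) (x - c) else Rmin (g1 x) (g2 x).

Lemma split_gauge_pos x : 0 < split_gauge x.
Proof.
  unfold split_gauge.
  destruct (Rlt_dec x c); [| destruct (Rlt_dec c x)]; apply Rmin_glb_lt; auto; lra.
Qed.

Lemma split_gauge_le_l t : t <= c -> split_gauge t <= g1 t.
Proof.
  intros. unfold split_gauge.
  destruct (Rlt_dec t c); [apply Rmin_l | destruct (Rlt_dec c t); [lra | apply Rmin_l]].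
Qed.

Lemma split_gauge_le_r t : c <= t -> split_gauge t <= g2 t.
Proof.
  intros. unfold split_gauge.
  destruct (Rlt_dec t c); [lra | destruct (Rlt_dec c t); [apply Rmin_l | apply Rmin_r]].
Qed.

Lemma split_gauge_lt t : t < c -> split_gauge t <= c - t.
Proof. intros. unfold split_gauge. destruct (Rlt_dec t c); [apply Rmin_r | lra]. Qed.

Lemma split_gauge_gt t : c < t -> split_gauge t <= t - c.
Proof.
  intros. unfold split_gauge.
  destruct (Rlt_dec t c); [lra | destruct (Rlt_dec c t); [apply Rmin_r | lra]].
Qed.

Lemma split_fine_partition a x l : a <= c -> fine_partition split_gauge a x l ->
  (x <= c -> fine_partition g1 a x l) /\
  (c < x -> exists l1 l2, fine_partition g1 a c l1 /\ fine_partition g2 c x l2 /\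
     forall f, riemann_sum f l = riemann_sum f l1 + riemann_sum f l2).
Proof.
  intros Hac. induction 1 as [|m x t l Hl [IH1 IH2] Hmx Hmt Htx H1 H2].
  { split; intros; [constructor | lra]. }
  split.
  - intros Hxc. pose proof (split_gauge_le_l t ltac:(lra)). constructor; try lra. apply IH1; lra.
  - intros Hcx. destruct (Rlt_le_dec c m) as [Hcm | Hmc].
    + destruct (IH2 Hcm) as [l1 [l2 [K1 [K2 K3]]]]. exists l1, ((m, t, x) :: l2).
      pose proof (split_gauge_le_r t ltac:(lra)).
      split; [exact K1 | split; [constructor; auto; lra | intros f; simpl; rewrite K3; ring]].
    + destruct (Req_dec m c) as [-> | Hmc'].
      * exists l, ((c, t, x) :: nil). pose proof (split_gauge_le_r t ltac:(lra)).
        split; [apply IH1; lra | split; [constructor; auto; [constructor | lra | lra] |]].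
        intros f; simpl; ring.
      * assert (Htc : t = c).
        { destruct (Rlt_le_dec t c) as [Htc | Hct]; [pose proof (split_gauge_lt t Htc); lra |].
          destruct (Req_dec t c); auto. pose proof (split_gauge_gt t ltac:(lra)); lra. }
        subst t. pose proof (split_gauge_le_l c ltac:(lra)). pose proof (split_gauge_le_r c ltac:(lra)).
        exists ((m, c, c) :: l), ((c, c, x) :: nil).
        split; [constructor; try lra; apply IH1; lra |].
        split; [constructor; try lra; constructor | intros f; simpl; ring].
Qed.
End SplitGauge.

Lemma gauge_integral_zero f a : gauge_integral f a a 0.
Proof.
  split; [lra |]. intros eps Heps. exists (fun _ => 1). split; [intros; lra |].
  intros l Hl. inversion Hl as [| m b t l' Hl' Hmb]; subst.
  - simpl. rewrite Rminus_0_r, Rabs_R0. exact Heps.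
  - pose proof (fine_partition_le _ _ _ _ Hl'). lra.
Qed.

Lemma gauge_integral_chasles f a b c I J : gauge_integral f a b I -> gauge_integral f b c J ->
  gauge_integral f a c (I + J).
Proof.
  intros [Hab H1] [Hbc H2]. split; [lra |]. intros eps Heps.
  destruct (H1 (eps / 2)) as [g1 [Hg1 K1]]; [lra |].
  destruct (H2 (eps / 2)) as [g2 [Hg2 K2]]; [lra |].
  exists (split_gauge g1 g2 b). split; [apply split_gauge_pos; auto |].
  intros l Hl. destruct (split_fine_partition g1 g2 b a c l Hab Hl) as [S1 S2].
  destruct (Req_dec b c) as [<- | Hbc'].
  - assert (J = 0) as ->.
    { apply (gauge_integral_unique f b b); [split; [lra | exact H2] | apply gauge_integral_zero]. }
    rewrite Rplus_0_r. pose proof (K1 l (S1 ltac:(lra))). lra.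
  - destruct (S2 ltac:(lra)) as [l1 [l2 [E1 [E2 ->]]]].
    pose proof (K1 _ E1). pose proof (K2 _ E2).
    replace (riemann_sum f l1 + riemann_sum f l2 - (I + J))
      with ((riemann_sum f l1 - I) + (riemann_sum f l2 - J)) by ring.
    eapply Rle_lt_trans; [apply Rabs_triang | lra].
Qed.

Lemma gauge_integral_subinterval_le f a b c d I J : gauge_integral f a b I -> gauge_integral f c d J ->
  a <= c -> d <= b -> (forall x, a <= x <= b -> 0 <= f x) -> J <= I.
Proof.
  intros HI HJ Hac Hdb Hf. pose proof (gauge_integral_le_ab _ _ _ _ HJ) as Hcd.
  destruct (gauge_integral_subinterval _ _ _ a c _ HI) as [J1 H1]; try lra.
  destruct (gauge_integral_subinterval _ _ _ d b _ HI) as [J3 H3]; try lra.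
  pose proof (gauge_integral_chasles _ _ _ _ _ _ (gauge_integral_chasles _ _ _ _ _ _ H1 HJ) H3) as Hall.
  rewrite (gauge_integral_unique _ _ _ _ _ HI Hall).
  pose proof (gauge_integral_nonneg _ _ _ _ H1 ltac:(intros; apply Hf; lra)).
  pose proof (gauge_integral_nonneg _ _ _ _ H3 ltac:(intros; apply Hf; lra)). lra.
Qed.

(** * Null sets *)

Lemma sum_f_R0_le_idx f n m : (forall i, 0 <= f i) -> (n <= m)%nat -> sum_f_R0 f n <= sum_f_R0 f m.
Proof. intros Hf. induction 1; simpl; [lra | pose proof (Hf (S m)); lra]. Qed.

Lemma sum_f_R0_ge_term f M i : (forall j, 0 <= f j) -> (i <= M)%nat -> f i <= sum_f_R0 f M.
Proof.
  intros Hf Hi. destruct i as [|i]; simpl.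
  - apply (sum_f_R0_le_idx f 0 M Hf Hi).
  - pose proof (cond_pos_sum f i Hf).
    enough (sum_f_R0 f i + f (S i) <= sum_f_R0 f M) by lra.
    apply (sum_f_R0_le_idx f (S i) M Hf Hi).
Qed.

Lemma sum_half_powers eps M : sum_f_R0 (fun k => eps / 2 ^ S k) M = eps * (1 - / 2 ^ S M).
Proof.
  induction M as [|M IH]; [simpl; field |].
  rewrite tech5, IH. assert (2 ^ M <> 0) by (apply pow_nonzero; lra). simpl. field; auto.
Qed.

Lemma sum_f_R0_interleave F1 F2 n :
  sum_f_R0 (fun i => if Nat.even i then F1 (Nat.div2 i) else F2 (Nat.div2 i)) (2 * n + 1)
  = sum_f_R0 F1 n + sum_f_R0 F2 n.
Proof.
  induction n as [|n IH]; [simpl; ring |].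
  replace (2 * S n + 1)%nat with (S (S (2 * n + 1))) by lia.
  rewrite !tech5, IH. replace (S (2 * n + 1)) with (2 * S n)%nat by lia.
  replace (S (2 * S n)) with (2 * S n + 1)%nat by lia.
  rewrite Nat.even_even, Nat.div2_double, Nat.even_odd, Nat.div2_odd'. simpl. ring.
Qed.

Lemma null_set_subset (N N' : R -> Prop) : (forall x, N' x -> N x) -> null_set N -> null_set N'.
Proof.
  intros H HN eps Heps. destruct (HN eps Heps) as [lo [hi [H1 [H2 H3]]]].
  exists lo, hi. split; [exact H1 | split; [intros x Hx; apply H2, H, Hx | exact H3]].
Qed.

Lemma null_set_point p : null_set (fun x => x = p).
Proof.
  intros eps Heps.
  exists (fun n => match n with O => p - eps / 2 | _ => 0 end).
  exists (fun n => match n with O => p + eps / 2 | _ => 0 end).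
  split; [intros [|n]; lra |].
  split; [intros x ->; exists O; lra |].
  intros n. induction n; simpl; lra.
Qed.

Lemma null_set_union N1 N2 : null_set N1 -> null_set N2 -> null_set (fun x => N1 x \/ N2 x).
Proof.
  intros H1 H2 eps Heps.
  destruct (H1 (eps / 2)) as [lo1 [hi1 [A1 [B1 C1]]]]; [lra |].
  destruct (H2 (eps / 2)) as [lo2 [hi2 [A2 [B2 C2]]]]; [lra |].
  exists (fun i => if Nat.even i then lo1 (Nat.div2 i) else lo2 (Nat.div2 i)).
  exists (fun i => if Nat.even i then hi1 (Nat.div2 i) else hi2 (Nat.div2 i)).
  split; [intros i; destruct (Nat.even i); auto |].
  split.
  - intros x [Hx | Hx].
    + destruct (B1 x Hx) as [k Hk]. exists (2 * k)%nat. rewrite Nat.even_even, Nat.div2_double. auto.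
    + destruct (B2 x Hx) as [k Hk]. exists (2 * k + 1)%nat. rewrite Nat.even_odd, Nat.div2_odd'. auto.
  - intros n. set (F1 := fun k => hi1 k - lo1 k). set (F2 := fun k => hi2 k - lo2 k).
    rewrite (sum_eq _ (fun i => if Nat.even i then F1 (Nat.div2 i) else F2 (Nat.div2 i)))
      by (intros i _; unfold F1, F2; destruct (Nat.even i); auto).
    eapply Rle_trans.
    + apply (sum_f_R0_le_idx _ n (2 * n + 1)); [| lia].
      intros i. unfold F1, F2. specialize (A1 (Nat.div2 i)). specialize (A2 (Nat.div2 i)).
      destruct (Nat.even i); lra.
    + rewrite sum_f_R0_interleave. specialize (C1 n). specialize (C2 n). unfold F1, F2. lra.
Qed.

Definition null_part (N : R -> Prop) (w : R -> R) (t : R) : R :=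
  if excluded_middle_informative (N t) then Rabs (w t) else 0.

Definition len_below (lo hi y : R) : R := Rmax 0 (Rmin y hi - lo).

Lemma len_below_mono lo hi y z : y <= z -> len_below lo hi y <= len_below lo hi z.
Proof.
  intros. unfold len_below. apply Rle_max_compat_l.
  assert (Rmin y hi <= Rmin z hi) by (unfold Rmin; destruct (Rle_dec y hi), (Rle_dec z hi); lra).
  lra.
Qed.

Lemma len_below_diff_le lo hi y z : lo <= hi -> len_below lo hi z - len_below lo hi y <= hi - lo.
Proof.
  intros. unfold len_below. pose proof (Rmax_l 0 (Rmin y hi - lo)).
  assert (Rmax 0 (Rmin z hi - lo) <= hi - lo) by (apply Rmax_lub; [lra | pose proof (Rmin_r z hi); lra]).
  lra.
Qed.

Lemma len_below_diff_inside lo hi y z : lo < y -> y <= z -> z < hi ->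
  len_below lo hi z - len_below lo hi y = z - y.
Proof.
  intros. unfold len_below. rewrite (Rmin_left z hi), (Rmin_left y hi) by lra.
  rewrite (Rmax_right 0 (z - lo)), (Rmax_right 0 (y - lo)) by lra. ring.
Qed.

Definition null_cover (N : R -> Prop) (e : R) (p : (nat -> R) * (nat -> R)) : Prop :=
  (forall n, fst p n <= snd p n) /\ (forall x, N x -> exists n, fst p n < x < snd p n) /\
  (forall n, sum_f_R0 (fun i => snd p i - fst p i) n <= e).

(* The [k]-th cover has total length [eps/((k+1) 2^(k+1))]; a tag [t] in [N] with
   [|w t| <= k] gets a piece inside one interval of the [k]-th cover, and since the
   pieces do not overlap, their total weight is at most [sum_k k eps/((k+1) 2^(k+1))]. *)
Section NullGauge.
Variables (N : R -> Prop) (w : R -> R) (eps : R).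
Hypotheses (HN : null_set N) (Heps : 0 < eps).

Let tol (k : nat) : R := eps / (INR k + 1) / 2 ^ S k.

Lemma tol_pos k : 0 < tol k.
Proof.
  apply Rdiv_lt_0_compat; [apply Rdiv_lt_0_compat; auto; pose proof (pos_INR k); lra | apply pow_lt; lra].
Qed.

Let cover (k : nat) : (nat -> R) * (nat -> R) :=
  epsilon (inhabits ((fun _ : nat => 0), (fun _ : nat => 0))) (null_cover N (tol k)).

Lemma cover_spec k : null_cover N (tol k) (cover k).
Proof.
  apply epsilon_spec. destruct (HN (tol k) (tol_pos k)) as [lo [hi H]]. exists (lo, hi). exact H.
Qed.

Let lo k n := fst (cover k) n.
Let hi k n := snd (cover k) n.

Let level (x : R) : nat := epsilon (inhabits 0%nat) (fun k => Rabs (w x) <= INR k).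

Lemma level_spec x : Rabs (w x) <= INR (level x).
Proof.
  apply (epsilon_spec (inhabits 0%nat) (fun k => Rabs (w x) <= INR k)).
  destruct (INR_archimed 1 (Rabs (w x))) as [n Hn]; [lra |]. exists n. lra.
Qed.

Let slot (x : R) : nat := epsilon (inhabits 0%nat) (fun n => lo (level x) n < x < hi (level x) n).

Lemma slot_spec x : N x -> lo (level x) (slot x) < x < hi (level x) (slot x).
Proof.
  intros Hx. apply (epsilon_spec (inhabits 0%nat) (fun n => lo (level x) n < x < hi (level x) n)).
  destruct (cover_spec (level x)) as [_ [H _]]. apply H, Hx.
Qed.

Let null_gauge_fun (x : R) : R :=
  if excluded_middle_informative (N x)
  then Rmin (x - lo (level x) (slot x)) (hi (level x) (slot x) - x) else 1.

Lemma null_gauge_fun_pos x : 0 < null_gauge_fun x.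
Proof.
  unfold null_gauge_fun. destruct (excluded_middle_informative (N x)) as [Hx |]; [| lra].
  pose proof (slot_spec x Hx). apply Rmin_glb_lt; lra.
Qed.

Let weighted_len (M : nat) (y z : R) : R :=
  sum_f_R0 (fun k => INR k * sum_f_R0 (fun n => len_below (lo k n) (hi k n) z - len_below (lo k n) (hi k n) y) M) M.

Lemma weighted_len_add M y z u : weighted_len M y z + weighted_len M z u = weighted_len M y u.
Proof.
  unfold weighted_len. rewrite <- plus_sum. apply sum_eq. intros k _.
  rewrite <- Rmult_plus_distr_l, <- plus_sum. f_equal. apply sum_eq. intros; ring.
Qed.

Lemma weighted_len_ge M y z k n : y <= z -> (k <= M)%nat -> (n <= M)%nat ->
  INR k * (len_below (lo k n) (hi k n) z - len_below (lo k n) (hi k n) y) <= weighted_len M y z.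
Proof.
  intros Hyz Hk Hn.
  assert (Hd : forall k n, 0 <= len_below (lo k n) (hi k n) z - len_below (lo k n) (hi k n) y).
  { intros. pose proof (len_below_mono (lo k0 n0) (hi k0 n0) y z Hyz). lra. }
  eapply Rle_trans; [| apply (sum_f_R0_ge_term (fun k => INR k * sum_f_R0
    (fun n => len_below (lo k n) (hi k n) z - len_below (lo k n) (hi k n) y) M) M k); auto].
  - apply Rmult_le_compat_l; [apply pos_INR |].
    apply (sum_f_R0_ge_term (fun n => len_below (lo k n) (hi k n) z - len_below (lo k n) (hi k n) y)); auto.
  - intros. apply Rmult_le_pos; [apply pos_INR | apply cond_pos_sum; auto].
Qed.

Lemma weighted_len_nonneg M y z : y <= z -> 0 <= weighted_len M y z.
Proof.
  intros Hyz. pose proof (weighted_len_ge M y z 0 0 Hyz (Nat.le_0_l _) (Nat.le_0_l _)). simpl in H. lra.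
Qed.

Lemma weighted_len_le M y z : weighted_len M y z <= eps.
Proof.
  apply Rle_trans with (sum_f_R0 (fun k => eps / 2 ^ S k) M).
  - apply sum_Rle. intros k _. destruct (cover_spec k) as [Hlh [_ Hs]].
    assert (Hk : sum_f_R0 (fun n => len_below (lo k n) (hi k n) z - len_below (lo k n) (hi k n) y) M
                 <= tol k).
    { eapply Rle_trans; [| apply (Hs M)]. apply sum_Rle. intros n _. apply len_below_diff_le, Hlh. }
    apply Rle_trans with (INR k * tol k); [apply Rmult_le_compat_l; [apply pos_INR | exact Hk] |].
    unfold tol. pose proof (pos_INR k). assert (0 < 2 ^ S k) by (apply pow_lt; lra).
    replace (INR k * (eps / (INR k + 1) / 2 ^ S k)) with (INR k / (INR k + 1) * (eps / 2 ^ S k))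
      by (field; lra).
    rewrite <- (Rmult_1_l (eps / 2 ^ S k)) at 2. apply Rmult_le_compat_r.
    + apply Rlt_le, Rdiv_lt_0_compat; auto.
    + apply Rmult_le_reg_r with (INR k + 1); [lra |]. field_simplify; lra.
  - rewrite sum_half_powers. assert (0 < / 2 ^ S M) by (apply Rinv_0_lt_compat, pow_lt; lra). nra.
Qed.

Lemma levels_bounded (l : list (R * R * R)) : exists M, forall m t x,
  In (m, t, x) l -> N t -> (level t <= M /\ slot t <= M)%nat.
Proof.
  induction l as [|[[m t] x] l [M HM]]; [exists 0%nat; intros ? ? ? [] |].
  exists (max M (max (level t) (slot t))). intros m' t' x' [E | Hin] Ht.
  - inversion E; subst. lia.
  - destruct (HM _ _ _ Hin Ht). lia.
Qed.

Lemma riemann_sum_null_part_le a x l M : fine_partition null_gauge_fun a x l ->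
  (forall m t y, In (m, t, y) l -> N t -> (level t <= M /\ slot t <= M)%nat) ->
  riemann_sum (null_part N w) l <= weighted_len M a x.
Proof.
  induction 1 as [|m x t l Hl IH Hmx Hmt Htx H1 H2]; intros HM; simpl; [apply weighted_len_nonneg; lra |].
  assert (IH' : riemann_sum (null_part N w) l <= weighted_len M a m)
    by (apply IH; intros; eapply HM; [right |]; eauto).
  rewrite <- (weighted_len_add M a m x).
  enough (null_part N w t * (x - m) <= weighted_len M m x) by lra.
  unfold null_part. destruct (excluded_middle_informative (N t)) as [Ht | Ht].
  - destruct (HM m t x (or_introl eq_refl) Ht) as [Hk Hn].
    pose proof (level_spec t). pose proof (slot_spec t Ht).
    assert (null_gauge_fun t <= t - lo (level t) (slot t) /\ null_gauge_fun t <= hi (level t) (slot t) - t).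
    { unfold null_gauge_fun. destruct (excluded_middle_informative (N t)); [| contradiction].
      split; [apply Rmin_l | apply Rmin_r]. }
    eapply Rle_trans; [| apply (weighted_len_ge M m x (level t) (slot t)); auto; lra].
    rewrite (len_below_diff_inside (lo (level t) (slot t)) (hi (level t) (slot t)) m x) by lra.
    apply Rmult_le_compat_r; lra.
  - rewrite Rmult_0_l. apply weighted_len_nonneg; lra.
Qed.

Lemma null_gauge : exists g, (forall x, 0 < g x) /\
  forall a b l, fine_partition g a b l -> riemann_sum (null_part N w) l <= eps.
Proof.
  exists null_gauge_fun. split; [apply null_gauge_fun_pos |]. intros a b l Hl.
  destruct (levels_bounded l) as [M HM].
  eapply Rle_trans; [apply (riemann_sum_null_part_le a b l M Hl HM) | apply weighted_len_le].
Qed.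
End NullGauge.

Lemma gauge_integral_modify_null f h a b I N : gauge_integral f a b I -> null_set N ->
  (forall x, a <= x <= b -> ~ N x -> f x = h x) -> gauge_integral h a b I.
Proof.
  intros [Hab H] HN Hfh. split; auto. intros eps Heps.
  destruct (H (eps / 2)) as [g1 [Hg1 K1]]; [lra |].
  destruct (null_gauge N (fun x => h x - f x) (eps / 2) HN) as [g2 [Hg2 K2]]; [lra |].
  exists (gauge_min g1 g2). split; [apply gauge_min_pos; auto |]. intros l Hl.
  pose proof (K1 l (fine_partition_min_l _ _ _ _ _ Hl)).
  pose proof (K2 a b l (fine_partition_min_r _ _ _ _ _ Hl)).
  assert (Hd : Rabs (riemann_sum (fun x => h x - f x) l) <= riemann_sum (null_part N (fun x => h x - f x)) l).
  { apply (riemann_sum_abs_le _ _ _ _ _ _ Hl). intros x Hx. unfold null_part.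
    destruct (excluded_middle_informative (N x)) as [| HNx]; [lra |].
    rewrite Hfh, Rminus_diag, Rabs_R0 by auto. lra. }
  rewrite riemann_sum_minus in Hd.
  replace (riemann_sum h l - I) with ((riemann_sum h l - riemann_sum f l) + (riemann_sum f l - I)) by ring.
  eapply Rle_lt_trans; [apply Rabs_triang | lra].
Qed.

Lemma gauge_integral_ae_lower f a b I m N : gauge_integral f a b I -> null_set N ->
  (forall x, a <= x <= b -> ~ N x -> m <= f x) -> m * (b - a) <= I.
Proof.
  intros HI HN Hf.
  set (h := fun x => if excluded_middle_informative (N x) then m else f x).
  assert (Hh : gauge_integral h a b I).
  { apply (gauge_integral_modify_null f h a b I N HI HN). intros x _ HNx.
    unfold h. destruct (excluded_middle_informative (N x)); tauto. }
  apply (gauge_integral_le _ _ _ _ _ _ (gauge_integral_const m a b (gauge_integral_le_ab _ _ _ _ HI)) Hh).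
  intros x Hx. unfold h. destruct (excluded_middle_informative (N x)); [lra | auto].
Qed.

Lemma gauge_integral_split_lower f a b I s mu N : gauge_integral f a b I -> s <= b -> 0 <= mu ->
  null_set N -> (forall x, a <= x <= b -> ~ N x -> (x < s -> 0 <= f x) /\ (s <= x -> - mu <= f x)) ->
  - mu * (b - s) <= I.
Proof.
  intros HI Hsb Hmu HN Hf. pose proof (gauge_integral_le_ab _ _ _ _ HI) as Hab.
  destruct (Rle_lt_dec s a) as [Hsa | Has].
  - assert (Hlow : forall x, a <= x <= b -> ~ N x -> - mu <= f x).
    { intros x Hx HNx. destruct (Hf x Hx HNx) as [_ Hge]. apply Hge; lra. }
    pose proof (gauge_integral_ae_lower f a b I (- mu) N HI HN Hlow). nra.
  - destruct (gauge_integral_subinterval f a b a s I HI) as [I1 H1]; try lra.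
    destruct (gauge_integral_subinterval f a b s b I HI) as [I2 H2]; try lra.
    rewrite (gauge_integral_unique _ _ _ _ _ HI (gauge_integral_chasles _ _ _ _ _ _ H1 H2)).
    assert (Hleft : forall x, a <= x <= s -> ~ (N x \/ x = s) -> 0 <= f x).
    { intros x Hx HNx. destruct (Hf x ltac:(lra) ltac:(tauto)) as [Hlt _]. apply Hlt.
      destruct (Req_dec x s); [tauto | lra]. }
    assert (Hright : forall x, s <= x <= b -> ~ N x -> - mu <= f x).
    { intros x Hx HNx. destruct (Hf x ltac:(lra) HNx) as [_ Hge]. apply Hge; lra. }
    pose proof (gauge_integral_ae_lower f a s I1 0 _ H1
      (null_set_union N _ HN (null_set_point s)) Hleft).
    pose proof (gauge_integral_ae_lower f s b I2 (- mu) N H2 HN Hright).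
    lra.
Qed.

(** * Products with continuous functions *)

Lemma gauge_integral_approx H f a b J : gauge_integral f a b J -> (forall x, a <= x <= b -> 0 <= f x) ->
  (forall e, 0 < e -> exists h K, gauge_integral h a b K /\
     forall x, a <= x <= b -> Rabs (H x - h x) <= e * f x) ->
  exists I, gauge_integral H a b I.
Proof.
  intros HJ Hf Happ. pose proof (gauge_integral_le_ab _ _ _ _ HJ) as Hab.
  apply gauge_integral_cauchy; auto. intros eps Heps.
  pose proof (Rabs_pos J) as HJpos.
  set (e := eps / (4 * (Rabs J + 1))).
  assert (He : 0 < e) by (unfold e; apply Rdiv_lt_0_compat; lra).
  assert (HeJ : e * (Rabs J + 1) = eps / 4) by (unfold e; field; lra).
  destruct (Happ e He) as [h [K [[_ HK] Hclose]]].
  destruct (HK (eps / 4)) as [g1 [Hg1 K1]]; [lra |].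
  destruct HJ as [_ HJ']. destruct (HJ' 1) as [g2 [Hg2 K2]]; [lra |].
  exists (gauge_min g1 g2). split; [apply gauge_min_pos; auto |].
  assert (Hone : forall l, fine_partition (gauge_min g1 g2) a b l ->
     Rabs (riemann_sum H l - K) < eps / 2).
  { intros l Hl.
    assert (Hdiff : Rabs (riemann_sum H l - riemann_sum h l) <= eps / 4).
    { rewrite <- riemann_sum_minus, <- HeJ.
      eapply Rle_trans; [apply (riemann_sum_abs_le _ _ _ _ _ (fun x => e * f x) Hl Hclose) |].
      rewrite riemann_sum_scal. apply Rmult_le_compat_l; [lra |].
      pose proof (K2 l (fine_partition_min_r _ _ _ _ _ Hl)) as Hf1. apply Rabs_def2 in Hf1.
      pose proof (Rle_abs J). lra. }
    pose proof (K1 l (fine_partition_min_l _ _ _ _ _ Hl)).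
    replace (riemann_sum H l - K) with ((riemann_sum H l - riemann_sum h l) + (riemann_sum h l - K)) by ring.
    eapply Rle_lt_trans; [apply Rabs_triang | lra]. }
  intros l1 l2 H1 H2. pose proof (Hone l1 H1). pose proof (Hone l2 H2).
  replace (riemann_sum H l1 - riemann_sum H l2)
    with ((riemann_sum H l1 - K) - (riemann_sum H l2 - K)) by ring.
  eapply Rle_lt_trans; [apply Rabs_triang |]. rewrite Rabs_Ropp. lra.
Qed.

Definition approximable (f phi : R -> R) (e u v : R) : Prop :=
  exists h K, gauge_integral h u v K /\ forall x, u <= x <= v -> Rabs (f x * phi x - h x) <= e * f x.

Lemma approximable_glue f phi e u c v : u <= c -> c <= v ->
  approximable f phi e u c -> approximable f phi e c v -> approximable f phi e u v.
Proof.
  intros Huc Hcv [h1 [K1 [I1 B1]]] [h2 [K2 [I2 B2]]].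
  exists (fun x => if Rlt_dec x c then h1 x else h2 x), (K1 + K2). split.
  - apply gauge_integral_chasles with c.
    + apply (gauge_integral_modify_null h1 _ _ _ _ (fun x => x = c) I1 (null_set_point c)).
      intros x Hx Hxc. destruct (Rlt_dec x c); auto. exfalso; apply Hxc; lra.
    + apply (gauge_integral_ext h2 _ _ _ _ I2). intros x Hx. destruct (Rlt_dec x c); auto. lra.
  - intros x Hx. destruct (Rlt_dec x c); [apply B1 | apply B2]; lra.
Qed.

Lemma approximable_small_oscillation f phi e a b J u v : gauge_integral f a b J ->
  (forall x, a <= x <= b -> 0 <= f x) -> a <= u -> u <= v -> v <= b ->
  (forall x, u <= x <= v -> Rabs (phi x - phi u) <= e) -> approximable f phi e u v.
Proof.
  intros HJ Hf Hau Huv Hvb Hphi.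
  destruct (gauge_integral_subinterval _ _ _ _ _ _ HJ Hau Huv Hvb) as [J' HJ'].
  exists (fun x => phi u * f x), (phi u * J'). split; [apply gauge_integral_scal; auto |].
  intros x Hx. replace (f x * phi x - phi u * f x) with (f x * (phi x - phi u)) by ring.
  rewrite Rabs_mult, (Rabs_right (f x)) by (apply Rle_ge, Hf; lra).
  rewrite (Rmult_comm e). apply Rmult_le_compat_l; [apply Hf; lra | auto].
Qed.

Lemma gauge_integral_mult_continuous f phi a b J : gauge_integral f a b J ->
  (forall x, a <= x <= b -> 0 <= f x) -> (forall x, continuity_pt phi x) ->
  exists K, gauge_integral (fun x => f x * phi x) a b K.
Proof.
  intros HJ Hf Hphi. pose proof (gauge_integral_le_ab _ _ _ _ HJ) as Hab.
  apply (gauge_integral_approx _ f a b J HJ Hf). intros e He.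
  destruct (Heine_cor2 (f := phi) (a := a) (b := b) ltac:(auto) (mkposreal e He)) as [[d Hd] Hunif].
  simpl in Hunif.
  assert (Hstep : forall n x, a <= x <= b -> x <= a + INR n * (d / 2) -> approximable f phi e a x).
  { induction n as [|n IH]; intros x Hx Hxn.
    - simpl in Hxn. apply (approximable_small_oscillation f phi e a b J a x HJ Hf); try lra.
      intros y Hy. replace y with a by lra. rewrite Rminus_diag, Rabs_R0. lra.
    - pose proof (pos_INR n).
      set (c := a + INR n * (d / 2)).
      assert (Hc : c = a + INR n * (d / 2)) by reflexivity. clearbody c.
      assert (a <= c) by nra.
      destruct (Rle_dec x c) as [Hxc | Hxc]; [apply IH; lra |].
      rewrite S_INR in Hxn.
      apply approximable_glue with c; try lra; [apply IH; lra |].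
      apply (approximable_small_oscillation f phi e a b J c x HJ Hf); try lra.
      intros y Hy. apply Rlt_le, Hunif; try lra. rewrite Rabs_right; lra. }
  destruct (INR_archimed (d / 2) (b - a)) as [n Hn]; [lra |].
  exact (Hstep n b ltac:(lra) ltac:(lra)).
Qed.

(** * Habits and the minimal consumption path *)

Lemma exp_le_1 x : x <= 0 -> exp x <= 1.
Proof.
  intros H. rewrite <- exp_0. destruct (Req_dec x 0) as [-> | Hne]; [lra |].
  left; apply exp_increasing; lra.
Qed.

Definition habit_integrand (eta : R) (c0 c : R -> R) (t u : R) : R :=
  concat c0 c u * exp (eta * (u - t)).

Section Habit.
Variables (epsh eta tau : R) (c0 : R -> R).
Hypotheses (heps : 0 < epsh) (heta : 0 < eta) (htau : 0 < tau) (hc0 : L1_past tau c0).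

Lemma concat_integral c : L1loc_pos c -> forall T, 0 <= T ->
  exists I, gauge_integral (concat c0 c) (- tau) T I.
Proof.
  intros [_ Hc] T HT. destruct hc0 as [_ [I0 HI0]]. apply gauge_integral_HK in HI0.
  destruct (Hc T HT) as [I1 HI1]. apply gauge_integral_HK in HI1.
  exists (I0 + I1). apply gauge_integral_chasles with 0.
  - apply (gauge_integral_modify_null c0 _ _ _ _ (fun u => u = 0) HI0 (null_set_point 0)).
    intros u Hu Hu0. unfold concat. destruct (Rlt_dec u 0); auto. exfalso; apply Hu0; lra.
  - apply (gauge_integral_ext c _ _ _ _ HI1). intros u Hu. unfold concat.
    destruct (Rlt_dec u 0); auto; lra.
Qed.

Lemma concat_nonneg c : L1loc_pos c -> forall u, - tau <= u -> 0 <= concat c0 c u.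
Proof.
  intros [Hc _] u Hu. unfold concat. destruct (Rlt_dec u 0).
  - destruct hc0 as [H _]. apply H; lra.
  - apply Hc; lra.
Qed.

Lemma habit_integrable c : L1loc_pos c -> forall t, 0 <= t ->
  exists I, gauge_integral (habit_integrand eta c0 c t) (t - tau) t I.
Proof.
  intros Hc t Ht. destruct (concat_integral c Hc t Ht) as [I HI].
  destruct (gauge_integral_subinterval _ _ _ (t - tau) t _ HI) as [J HJ]; try lra.
  apply (gauge_integral_mult_continuous _ (fun u => exp (eta * (u - t))) _ _ _ HJ).
  - intros u Hu. apply concat_nonneg; auto; lra.
  - intros; reg.
Qed.

Lemma habit_value c t I : gauge_integral (habit_integrand eta c0 c t) (t - tau) t I ->
  habit epsh eta tau c0 c t = epsh * I.
Proof. intros H. unfold habit. f_equal. apply HKint_gauge_integral, H. Qed.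

Lemma habit_bounded c : L1loc_pos c -> forall T, 0 <= T -> exists B,
  forall t, 0 <= t <= T -> 0 <= habit epsh eta tau c0 c t <= B.
Proof.
  intros Hc T HT. destruct (concat_integral c Hc T HT) as [IT HIT].
  exists (epsh * IT). intros t Ht.
  destruct (habit_integrable c Hc t ltac:(lra)) as [I HI]. rewrite (habit_value c t I HI).
  destruct (gauge_integral_subinterval _ _ _ (t - tau) t _ HIT) as [J HJ]; try lra.
  assert (0 <= I).
  { apply (gauge_integral_nonneg _ _ _ _ HI). intros u Hu. unfold habit_integrand.
    apply Rmult_le_pos; [apply concat_nonneg; auto; lra | left; apply exp_pos]. }
  assert (I <= J).
  { apply (gauge_integral_le _ _ _ _ _ _ HI HJ). intros u Hu. unfold habit_integrand.
    pose proof (concat_nonneg c Hc u ltac:(lra)). pose proof (exp_le_1 (eta * (u - t)) ltac:(nra)).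
    pose proof (exp_pos (eta * (u - t))). nra. }
  assert (J <= IT).
  { apply (gauge_integral_subinterval_le _ _ _ _ _ _ _ HIT HJ); try lra.
    intros u Hu. apply concat_nonneg; auto; lra. }
  split; [nra | apply Rmult_le_compat_l; lra].
Qed.
End Habit.

Section Comparison.
Variables (epsh eta tau : R) (c0 c cm : R -> R).
Hypotheses (heps : 0 < epsh) (heta : 0 < eta) (htau : 0 < tau) (hc0 : L1_past tau c0)
  (hc : L1loc_pos c) (hcm : L1loc_pos cm)
  (hcm_eq : ae_pos (fun t => cm t = habit epsh eta tau c0 cm t))
  (hc_h : ae_pos (fun t => c t >= habit epsh eta tau c0 c t)).

Let gap (t : R) : R := habit epsh eta tau c0 c t - habit epsh eta tau c0 cm t.

Let bad (t : R) : Prop :=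
  (0 <= t /\ ~ c t >= habit epsh eta tau c0 c t) \/ (0 <= t /\ ~ cm t = habit epsh eta tau c0 cm t).

Lemma bad_null : null_set bad.
Proof. apply null_set_union; auto. Qed.

Lemma consumption_gap_ge u : 0 <= u -> ~ bad u -> c u - cm u >= gap u.
Proof.
  intros Hu Hn. unfold gap.
  assert (c u >= habit epsh eta tau c0 c u) by (apply NNPP; intro; apply Hn; left; auto).
  assert (cm u = habit epsh eta tau c0 cm u) by (apply NNPP; intro; apply Hn; right; auto).
  lra.
Qed.

Lemma gap_integral t : 0 <= t -> exists I,
  gauge_integral (fun u => (concat c0 c u - concat c0 cm u) * exp (eta * (u - t))) (t - tau) t I /\
  gap t = epsh * I.
Proof.
  intros Ht.
  destruct (habit_integrable eta tau c0 htau hc0 c hc t Ht) as [I1 H1].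
  destruct (habit_integrable eta tau c0 htau hc0 cm hcm t Ht) as [I2 H2].
  exists (I1 - I2). split.
  - apply (gauge_integral_ext _ _ _ _ _ (gauge_integral_minus _ _ _ _ _ _ H1 H2)).
    intros; unfold habit_integrand; ring.
  - unfold gap. rewrite (habit_value epsh eta tau c0 c t I1 H1), (habit_value epsh eta tau c0 cm t I2 H2).
    ring.
Qed.

Lemma gap_bounded_below T : 0 <= T -> exists B, forall t, 0 <= t <= T -> - B <= gap t.
Proof.
  intros HT.
  destruct (habit_bounded epsh eta tau c0 heps heta htau hc0 cm hcm T HT) as [B HB].
  destruct (habit_bounded epsh eta tau c0 heps heta htau hc0 c hc T HT) as [B' HB'].
  exists B. intros t Ht. specialize (HB t Ht). specialize (HB' t Ht). unfold gap. lra.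
Qed.

(* Where [gap] is already nonnegative, [c - cm >= gap] makes the integrand nonnegative,
   so only the part of the memory window after [s] can pull [gap u] down. *)
Lemma gap_lower_bound s mu u : 0 <= s -> s <= u -> 0 <= mu ->
  (forall v, 0 <= v < s -> 0 <= gap v) -> (forall v, s <= v <= u -> - mu <= gap v) ->
  - (epsh * mu * (u - s)) <= gap u.
Proof.
  intros Hs Hsu Hmu Hbefore Hafter.
  destruct (gap_integral u ltac:(lra)) as [I [HI ->]].
  enough (- mu * (u - s) <= I) by nra.
  apply (gauge_integral_split_lower _ _ _ _ s mu bad HI); auto; [apply bad_null |].
  intros v Hv Hbad. unfold concat. destruct (Rlt_dec v 0) as [Hv0 | Hv0].
  - rewrite Rminus_diag, Rmult_0_l. split; intros; lra.
  - pose proof (consumption_gap_ge v ltac:(lra) Hbad).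
    pose proof (exp_pos (eta * (v - u))). pose proof (exp_le_1 (eta * (v - u)) ltac:(nra)).
    split; intros Hvs.
    + pose proof (Hbefore v ltac:(lra)). nra.
    + pose proof (Hafter v ltac:(lra)). nra.
Qed.

Lemma gap_nonneg_step s : 0 <= s -> (forall v, 0 <= v < s -> 0 <= gap v) ->
  forall t, s <= t <= s + / (2 * epsh) -> 0 <= gap t.
Proof.
  intros Hs Hbefore. set (del := / (2 * epsh)).
  assert (Hdel : 0 < del) by (apply Rinv_0_lt_compat; lra).
  assert (Hed : epsh * del = 1 / 2) by (unfold del; field; lra).
  destruct (gap_bounded_below (s + del) ltac:(lra)) as [B HB].
  set (E := fun y => exists u, s <= u <= s + del /\ y = Rmax 0 (- gap u)).
  destruct (completeness E) as [mu [Hub Hlub]].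
  { exists (Rmax 0 B). intros y [u [Hu ->]]. specialize (HB u ltac:(lra)).
    apply Rmax_lub; [apply Rmax_l | eapply Rle_trans; [| apply Rmax_r]; lra]. }
  { exists (Rmax 0 (- gap s)), s. split; [lra | reflexivity]. }
  assert (Hmu_ge : forall u, s <= u <= s + del -> - mu <= gap u).
  { intros u Hu. assert (Rmax 0 (- gap u) <= mu) by (apply Hub; exists u; auto).
    pose proof (Rmax_r 0 (- gap u)). lra. }
  assert (Hmu0 : 0 <= mu).
  { eapply Rle_trans; [| apply Hub; exists s; split; [lra | reflexivity]]. apply Rmax_l. }
  assert (Hhalf : is_upper_bound E (mu / 2)).
  { intros y [u [Hu ->]]. apply Rmax_lub; [lra |].
    pose proof (gap_lower_bound s mu u Hs ltac:(lra) Hmu0 Hbefore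
      ltac:(intros v Hv; apply Hmu_ge; lra)).
    assert (epsh * mu * (u - s) <= epsh * mu * del) by (apply Rmult_le_compat_l; nra).
    nra. }
  pose proof (Hlub _ Hhalf). intros t Ht. pose proof (Hmu_ge t Ht). lra.
Qed.

Lemma gap_nonneg t : 0 <= t -> 0 <= gap t.
Proof.
  set (del := / (2 * epsh)).
  assert (Hdel : 0 < del) by (apply Rinv_0_lt_compat; lra).
  assert (Hblocks : forall n v, 0 <= v < INR n * del -> 0 <= gap v).
  { induction n as [|n IH]; intros v Hv; [simpl in Hv; lra |].
    rewrite S_INR in Hv. pose proof (pos_INR n).
    destruct (Rlt_le_dec v (INR n * del)) as [Hlt | Hge]; [apply IH; lra |].
    apply (gap_nonneg_step (INR n * del)); [nra | exact IH | fold del; lra]. }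
  intros Ht. destruct (INR_archimed del t Hdel) as [n Hn]. apply (Hblocks n). lra.
Qed.

Lemma consumption_ge_minimal : ae_pos (fun t => c t >= cm t).
Proof.
  apply (null_set_subset bad); [| apply bad_null].
  intros t [Ht Hn]. apply NNPP. intro Hbad. apply Hn.
  pose proof (consumption_gap_ge t Ht Hbad). pose proof (gap_nonneg t Ht). lra.
Qed.
End Comparison.

Lemma capital_le_kM A delta k0 c cm : L1loc_pos c -> L1loc_pos cm -> ae_pos (fun t => c t >= cm t) ->
  forall t, 0 <= t -> kpath A delta k0 c t <= kM A delta k0 cm t.
Proof.
  intros [hc hcint] [hcm hcmint] hae t Ht. set (r := A - delta).
  destruct (hcint t Ht) as [Ic HIc]. apply gauge_integral_HK in HIc.
  destruct (hcmint t Ht) as [Im HIm]. apply gauge_integral_HK in HIm.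
  destruct (gauge_integral_mult_continuous c (fun u => exp (r * (t - u))) 0 t Ic HIc) as [I1 H1];
    [intros; apply hc; lra | intros; reg |].
  destruct (gauge_integral_mult_continuous cm (fun u => exp (- r * u)) 0 t Im HIm) as [I2 H2];
    [intros; apply hcm; lra | intros; reg |].
  assert (H1' : gauge_integral (fun u => exp (r * (t - u)) * c u) 0 t I1)
    by (apply (gauge_integral_ext _ _ _ _ _ H1); intros; ring).
  pose proof (gauge_integral_minus _ _ _ _ _ _ H1' (gauge_integral_scal (exp (r * t)) _ _ _ _ H2)) as H3.
  assert (0 * (t - 0) <= I1 - exp (r * t) * I2).
  { apply (gauge_integral_ae_lower _ _ _ _ 0 _ H3 hae). intros u Hu Hbad.
    assert (c u >= cm u) by (apply NNPP; intro; apply Hbad; split; [lra | auto]).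
    replace (exp (r * (t - u)) * c u - exp (r * t) * (cm u * exp (- r * u)))
      with (exp (r * (t - u)) * (c u - cm u))
      by (replace (r * (t - u)) with (r * t + - r * u) by ring; rewrite exp_plus; ring).
    pose proof (exp_pos (r * (t - u))). nra. }
  unfold kpath, kM. fold r.
  rewrite (HKint_gauge_integral _ _ _ _ H1'), (HKint_gauge_integral _ _ _ _ H2). lra.
Qed.

Theorem mainTheorem1 (A delta epsh eta tau k0 : R) (c0 cm : R -> R)
  (hA : 0 < A) (hdelta : 0 < delta) (heps : 0 < epsh) (heta : 0 < eta)
  (htau : 0 < tau) (hk0 : 0 <= k0) (hc0 : L1_past tau c0)
  (hcm : L1loc_pos cm)
  (hcm_eq : ae_pos (fun t => cm t = habit epsh eta tau c0 cm t)) :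
  forall c : R -> R, L1loc_pos c ->
    ae_pos (fun t => c t >= habit epsh eta tau c0 c t) ->
    ae_pos (fun t => c t >= cm t) /\
    (forall t, 0 <= t -> kpath A delta k0 c t <= kM A delta k0 cm t).
Proof.
  intros c hc hc_h.
  pose proof (consumption_ge_minimal epsh eta tau c0 c cm heps heta htau hc0 hc hcm hcm_eq hc_h) as Hge.
  split; [exact Hge | exact (capital_le_kM A delta k0 c cm hc hcm Hge)].
Qed.
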